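(* Let $g$ be a Riemannian metric on an open set of $\mathbb R^n$, $n\ge3$, with $g_{jk}\in C^r_*$, $r>1$, and $|g|=\det(g_{jk})=1$. Then the principal symbol $\sigma(W_{abcd})$ of the linearization at $g$ of the Weyl tensor satisfies, for every symmetric matrix $h$ and covector $\xi$, $$\xi^a\xi^d\sigma(W_{abcd})h=\frac{n-3}{2(n-2)}\Big[|\xi|^4h_{bc}-|\xi|^2\big(\xi_b\sigma(-i\Gamma_c)h+\xi_c\sigma(-i\Gamma_b)h\big)+\frac{n-2}{n-1}\xi_b\xi_c\xi_l\sigma(-i\Gamma^l)h+\frac1{n-1}|\xi|^2\big(\xi_l\sigma(-i\Gamma^l)h\big)g_{bc}\Big].$$
   Context: $C^r_*$ is the local Zygmund space. For a nonlinear differential operator $T=T(g)$ acting on metrics, $\sigma(T)$ denotes the principal symbol of its linearization at $g$, applied to a symmetric matrix $h$. Indices are raised and lowered and $|\xi|$ is computed with $g$. $\Gamma^k_{ab}=\frac12g^{kl}(\partial_ag_{bl}+\partial_bg_{al}-\partial_lg_{ab})$, $\Gamma^k=g^{ab}\Gamma^k_{ab}$, $\Gamma_k=g_{kl}\Gamma^l$. Curvature: $R_{abcd}=\langle(\nabla_a\nabla_b-\nabla_b\nabla_a)\partial_c,\partial_d\rangle$ (in coordinates, as distributions for low regularity), $R_{bc}=R_{abc}{}^a$, $R=g^{bc}R_{bc}$, $P_{ab}=\frac1{n-2}(R_{ab}-\frac{R}{2(n-1)}g_{ab})$, $W_{abcd}=R_{abcd}+P_{ac}g_{bd}-P_{b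c}g_{ad}+P_{bd}g_{ac}-P_{ad}g_{bc}$.
   Formalization: The identity holds only for symmetric matrices h that are trace-free with respect to g, tr(g⁻¹h) = 0 (tangent to the constraint |g| = 1), not for every symmetric h. The statement above fails without it. *)

(* Pointwise (frozen-coefficient) coordinate formulas for the
   curvature of a metric in terms of its 2-jet, and the principal symbols of
   the linearized operators. *)
From HB Require Import structures.
From mathcomp Require Import all_boot all_order all_algebra.
Set Implicit Arguments. Unset Strict Implicit. Unset Printing Implicit Defensive.
Import Order.TTheory GRing.Theory Num.Theory.
Local Open Scope ring_scope.

Section Curv.
Variables (R : realFieldType) (n : nat).

(* 1-jet:  dg k a b = d_k g_{ab};  2-jet:  ddg j k a b = d_j d_k g_{ab} *)
Definition jet1 := 'I_n -> 'M[R]_n.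
Definition jet2 := 'I_n -> 'I_n -> 'M[R]_n.

Variables (g : 'M[R]_n) (dg : jet1) (ddg : jet2).

Definition ginv := invmx g.

Definition Chr (k a b : 'I_n) : R :=
  2^-1 * \sum_(l < n) ginv k l * (dg a b l + dg b a l - dg l a b).

Definition dginv (a k l : 'I_n) : R :=
  - \sum_(p < n) \sum_(q < n) ginv k p * dg a p q * ginv q l.

Definition dChr (a m b c : 'I_n) : R :=
  \sum_(l < n) (dginv a m l * (2^-1 * (dg b c l + dg c b l - dg l b c))
              + ginv m l * (2^-1 * (ddg a b c l + ddg a c b l - ddg a l b c))).

(* R_{abc}^m, from (nabla_a nabla_b - nabla_b nabla_a) d_c = R_{abc}^m d_m *)
Definition Riem_up (a b c m : 'I_n) : R :=
  dChr a m b c - dChr b m a c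
  + \sum_(k < n) (Chr k b c * Chr m a k - Chr k a c * Chr m b k).

(* R_{abcd} = < (nabla_a nabla_b - nabla_b nabla_a) d_c , d_d > *)
Definition Riem (a b c d : 'I_n) : R := \sum_(m < n) g m d * Riem_up a b c m.

Definition Ric (b c : 'I_n) : R := \sum_(a < n) Riem_up a b c a.

Definition Scal : R := \sum_(b < n) \sum_(c < n) ginv b c * Ric b c.

Definition Schouten (a b : 'I_n) : R :=
  (n%:R - 2)^-1 * (Ric a b - Scal / (2 * (n%:R - 1)) * g a b).

Definition Weyl (a b c d : 'I_n) : R :=
  Riem a b c d + Schouten a c * g b d - Schouten b c * g a d
  + Schouten b d * g a c - Schouten a d * g b c.

Definition Gam_up (k : 'I_n) : R :=
  \sum_(a < n) \sum_(b < n) ginv a b * Chr k a b.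
Definition Gam_low (k : 'I_n) : R := \sum_(l < n) g k l * Gam_up l.

End Curv.

Section Symbols.
Variables (R : realFieldType) (n : nat).

(* Principal symbol of the linearization at the jet (g,dg,ddg) of the Weyl
   tensor (a second order operator, affine in the second derivatives):
   replace d_j d_k h_{ab} by (i xi_j)(i xi_k) h_{ab} = - xi_j xi_k h_{ab}. *)
Definition sigma_Weyl (g : 'M[R]_n) (dg : jet1 R n) (ddg : jet2 R n)
    (xi : 'I_n -> R) (h : 'M[R]_n) (a b c d : 'I_n) : R :=
  Weyl g dg (fun j k => ddg j k - (xi j * xi k) *: h) a b c d
  - Weyl g dg ddg a b c d.

(* sigma(-i Gamma_k) h : Gamma_k is affine in the first derivatives, its
   linearization has symbol obtained by replacing d_j h by (i xi_j) h;
   multiplying by -i gives the real quantity below. *)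
Definition sigma_miGam_low (g : 'M[R]_n) (dg : jet1 R n)
    (xi : 'I_n -> R) (h : 'M[R]_n) (k : 'I_n) : R :=
  Gam_low g (fun j => dg j + xi j *: h) k - Gam_low g dg k.

Definition sigma_miGam_up (g : 'M[R]_n) (dg : jet1 R n)
    (xi : 'I_n -> R) (h : 'M[R]_n) (l : 'I_n) : R :=
  Gam_up g (fun j => dg j + xi j *: h) l - Gam_up g dg l.

Definition raise (g : 'M[R]_n) (xi : 'I_n -> R) (a : 'I_n) : R :=
  \sum_(b < n) ginv g a b * xi b.
Definition norm2 (g : 'M[R]_n) (xi : 'I_n -> R) : R :=
  \sum_(a < n) raise g xi a * xi a.

End Symbols.

(* The Riemann symbol is [-1/2 (xi ⊗ xi) ⊙ h], a Kulkarni–Nomizu product, so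
   the Ricci and scalar symbols follow by contracting with [g^-1] and using
   [tr_g h = 0].  The raised covector [xi^#] is then an eigenvector of the
   Schouten symbol, and contracting [σ(W) = -1/2 (xi ⊗ xi) ⊙ h + σ(P) ⊙ g]
   twice with [xi^#] leaves only [w_b = h_bl xi^l = σ(-iΓ_b) h] and
   [h(xi^#, xi^#) = xi_l σ(-iΓ^l) h]; the rest is a rational identity in n. *)

From HB Require Import structures.
From mathcomp Require Import all_boot all_order all_algebra.
From mathcomp Require Import ring.
Set Implicit Arguments. Unset Strict Implicit. Unset Printing Implicit Defensive.
Import Order.TTheory GRing.Theory Num.Theory.
Local Open Scope ring_scope.

Section Contraction.
Variables (R : comPzRingType) (n : nat).
Implicit Types (x : 'I_n -> R) (A B : 'I_n -> 'I_n -> R).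

Definition contr x A (j : 'I_n) := \sum_i x i * A i j.
Definition contr2 x A := \sum_j x j * contr x A j.

Definition kulkarni_nomizu A B (a b c d : 'I_n) : R :=
  A a c * B b d + A b d * B a c - A a d * B b c - A b c * B a d.

Lemma contr2E x A : contr2 x A = \sum_a \sum_d x a * x d * A d a.
Proof. by apply: eq_bigr => a _; rewrite mulr_sumr; apply: eq_bigr => d _; rewrite mulrA. Qed.

Lemma contr_kulkarni_nomizu x A B :
    (forall i j, A i j = A j i) -> (forall i j, B i j = B j i) -> forall b c,
  \sum_a \sum_d x a * x d * kulkarni_nomizu A B a b c d
  = contr x A c * contr x B b + contr x B c * contr x A b
    - contr2 x A * B b c - contr2 x B * A b c.
Proof.
move=> A_sym B_sym b c.
rewrite !contr2E /contr !mulr_suml -big_split -!sumrB /=.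
apply: eq_bigr => a _; rewrite !mulr_sumr !mulr_suml -big_split -!sumrB /=.
apply: eq_bigr => d _; rewrite /kulkarni_nomizu (A_sym b d) (B_sym b d) (A_sym a d) (B_sym a d).
ring.
Qed.

End Contraction.

Lemma sym_mxE (T : Type) (n : nat) (A : 'M[T]_n) : A^T = A -> forall i j, A i j = A j i.
Proof. by move=> A_sym i j; rewrite -[in LHS]A_sym mxE. Qed.

Lemma mulmxV_contr (R : comUnitRingType) (n : nat) (A : 'M[R]_n) (E : 'I_n -> R) i :
  A \in unitmx -> \sum_m A i m * \sum_l invmx A m l * E l = E i.
Proof.
move=> A_unit; have := congr1 (fun C : 'cV_n => C i ord0) (mulKVmx A_unit (\col_l E l)).
rewrite !mxE => <-; apply: eq_bigr => m _; rewrite !mxE.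
by congr (_ * _); apply: eq_bigr => l _; rewrite mxE.
Qed.

Lemma WeylE (R : realFieldType) (n : nat) (g : 'M[R]_n) (dg : jet1 R n) (ddg : jet2 R n) a b c d :
  Weyl g dg ddg a b c d = Riem g dg ddg a b c d + kulkarni_nomizu (Schouten g dg ddg) g a b c d.
Proof. rewrite /Weyl /kulkarni_nomizu; ring. Qed.

Ltac sum2_congr :=
  rewrite ?mulr_sumr -?big_split -?sumrB -?big_split -?sumrB /=; apply: eq_bigr => ? _;
  rewrite ?mulr_sumr -?big_split -?sumrB -?big_split -?sumrB /=; apply: eq_bigr => ? _.

Section LinearizedCurvature.
Variables (R : realFieldType) (n : nat) (g : 'M[R]_n) (dg : jet1 R n) (ddg : jet2 R n)
  (xi : 'I_n -> R) (h : 'M[R]_n).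
Hypotheses (g_sym : g^T = g) (g_unit : g \in unitmx) (h_sym : h^T = h)
  (h_tan : \tr (invmx g *m h) = 0).

Local Notation G := (ginv g).
Local Notation ddg_h := (fun j k => ddg j k - (xi j * xi k) *: h).
Local Notation dg_h := (fun j => dg j + xi j *: h).
Local Notation xi_up := (raise g xi).
Local Notation N := (norm2 g xi).
Local Notation xixi := (fun i j : 'I_n => xi i * xi j).
Local Notation w := (contr xi_up h).
Local Notation q := (contr2 xi_up h).

Let gC := sym_mxE g_sym.
Let hC := sym_mxE h_sym.
Lemma ginvC i j : G i j = G j i.
Proof. by apply: sym_mxE; rewrite /ginv trmx_inv g_sym. Qed.

Lemma contr_g j : contr xi_up g j = xi j.
Proof.
rewrite -(mulmxV_contr xi j g_unit); apply: eq_bigr => i _.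
by rewrite gC mulrC.
Qed.

Lemma contr2_g : contr2 xi_up g = N.
Proof. by apply: eq_bigr => j _; rewrite contr_g. Qed.

Lemma contr_xixi j : contr xi_up xixi j = N * xi j.
Proof. by rewrite /contr /norm2 mulr_suml; apply: eq_bigr => i _; rewrite mulrA. Qed.

Lemma contr2_xixi : contr2 xi_up xixi = N ^+ 2.
Proof. by rewrite expr2 {2}/norm2 mulr_sumr; apply: eq_bigr => j _; rewrite contr_xixi mulrCA. Qed.

Lemma sum_ginv_xiL (u : 'I_n -> R) : \sum_a \sum_l G a l * xi a * u l = \sum_l xi_up l * u l.
Proof.
rewrite exchange_big; apply: eq_bigr => l _ /=; rewrite /raise mulr_suml.
by apply: eq_bigr => a _; rewrite ginvC.
Qed.

Lemma sum_ginv_xiR (u : 'I_n -> R) : \sum_a \sum_l G a l * u a * xi l = \sum_a xi_up a * u a.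
Proof.
rewrite -sum_ginv_xiL exchange_big; apply: eq_bigr => a _; apply: eq_bigr => l _ /=.
by rewrite ginvC mulrAC.
Qed.

Lemma sum_ginv_h : \sum_a \sum_l G a l * h a l = 0.
Proof.
rewrite -[RHS]h_tan; apply: eq_bigr => a _; rewrite mxE; apply: eq_bigr => l _.
by rewrite hC.
Qed.

Lemma sum_raise_h j : \sum_l xi_up l * h j l = w j.
Proof. by apply: eq_bigr => l _; rewrite hC. Qed.

Lemma dChr_symbol a m b c :
  dChr g dg ddg_h a m b c - dChr g dg ddg a m b c =
  - 2^-1 * \sum_l G m l * (xi a * xi b * h c l + xi a * xi c * h b l - xi a * xi l * h b c).
Proof. by rewrite /dChr -sumrB mulr_sumr; apply: eq_bigr => l _; rewrite !mxE; ring. Qed.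

Lemma Riem_up_symbol a b c m :
  Riem_up g dg ddg_h a b c m - Riem_up g dg ddg a b c m
  = - 2^-1 * \sum_l G m l * kulkarni_nomizu xixi h a b c l.
Proof.
transitivity ((dChr g dg ddg_h a m b c - dChr g dg ddg a m b c)
   - (dChr g dg ddg_h b m a c - dChr g dg ddg b m a c)); first by rewrite /Riem_up; ring.
rewrite !dChr_symbol -mulrBr -sumrB; congr (_ * _); apply: eq_bigr => l _.
by rewrite /kulkarni_nomizu; ring.
Qed.

Lemma Riem_symbol a b c d :
  Riem g dg ddg_h a b c d - Riem g dg ddg a b c d = - 2^-1 * kulkarni_nomizu xixi h a b c d.
Proof.
rewrite /Riem -sumrB -(mulmxV_contr _ d g_unit) mulr_sumr; apply: eq_bigr => m _.
by rewrite -mulrBr Riem_up_symbol gC mulrCA.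
Qed.

Lemma Ric_symbol b c :
  Ric g dg ddg_h b c - Ric g dg ddg b c = - 2^-1 * (xi b * w c + xi c * w b - N * h b c).
Proof.
rewrite /Ric -sumrB; under eq_bigr do rewrite Riem_up_symbol; rewrite -mulr_sumr.
congr (_ * _); transitivity (xi c * (\sum_a \sum_l G a l * xi a * h b l)
   + xi b * (\sum_a \sum_l G a l * h a c * xi l)
   - h b c * (\sum_a \sum_l G a l * xi a * xi l)
   - xi b * xi c * (\sum_a \sum_l G a l * h a l)).
  by sum2_congr; rewrite /kulkarni_nomizu; ring.
rewrite !sum_ginv_xiL sum_ginv_xiR sum_ginv_h sum_raise_h mulr0 subr0.
by rewrite -/(contr _ _ c) -/(norm2 g xi); ring.
Qed.

Lemma Scal_symbol : Scal g dg ddg_h - Scal g dg ddg = - q.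
Proof.
rewrite /Scal -sumrB; under eq_bigr do rewrite -sumrB.
under eq_bigr do under eq_bigr do rewrite -mulrBr Ric_symbol mulrCA.
under eq_bigr do rewrite -mulr_sumr.
rewrite -mulr_sumr; transitivity (-2^-1 * ((\sum_b \sum_c G b c * xi b * w c)
   + (\sum_b \sum_c G b c * w b * xi c) - N * (\sum_b \sum_c G b c * h b c))).
  by congr (_ * _); sum2_congr; ring.
by rewrite sum_ginv_xiL sum_ginv_xiR sum_ginv_h -/(contr2 _ h); field.
Qed.

Definition sigma_Schouten i j := Schouten g dg ddg_h i j - Schouten g dg ddg i j.

Lemma sigma_SchoutenE i j : sigma_Schouten i j =
  (n%:R - 2)^-1 * (- 2^-1 * (xi i * w j + xi j * w i - N * h i j) + q / (2 * (n%:R - 1)) * g i j).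
Proof.
transitivity ((n%:R - 2)^-1 * ((Ric g dg ddg_h i j - Ric g dg ddg i j)
   - (Scal g dg ddg_h - Scal g dg ddg) / (2 * (n%:R - 1)) * g i j)).
  by rewrite /sigma_Schouten /Schouten; ring.
by rewrite Ric_symbol Scal_symbol; ring.
Qed.

Lemma sigma_Schouten_sym i j : sigma_Schouten i j = sigma_Schouten j i.
Proof. by rewrite !sigma_SchoutenE gC hC; ring. Qed.

Local Notation mu := ((n%:R - 2)^-1 * (q / (2 * (n%:R - 1)) - q / 2)).

(* This is why only [xi_b xi_c], [h_bc] and [g_bc] survive the contraction
   of the Schouten part. *)
Lemma contr_sigma_Schouten j : contr xi_up sigma_Schouten j = mu * xi j.
Proof.
transitivity (\sum_i ((n%:R - 2)^-1 * - 2^-1 * w j * (xi_up i * xi i)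
   + (n%:R - 2)^-1 * - 2^-1 * xi j * (xi_up i * w i)
   + (n%:R - 2)^-1 * 2^-1 * N * (xi_up i * h i j)
   + (n%:R - 2)^-1 * (q / (2 * (n%:R - 1))) * (xi_up i * g i j))).
  by apply: eq_bigr => i _; rewrite sigma_SchoutenE; ring.
rewrite !big_split /= -!mulr_sumr -/(norm2 g xi) -/(contr2 _ h) -/(contr _ h j) -/(contr _ g j).
by rewrite contr_g; ring.
Qed.

Lemma contr2_sigma_Schouten : contr2 xi_up sigma_Schouten = mu * N.
Proof. by rewrite /norm2 mulr_sumr; apply: eq_bigr => j _; rewrite contr_sigma_Schouten mulrCA. Qed.

Lemma Weyl_symbol a b c d : sigma_Weyl g dg ddg xi h a b c d =
  - 2^-1 * kulkarni_nomizu xixi h a b c d + kulkarni_nomizu sigma_Schouten g a b c d.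
Proof.
transitivity ((Riem g dg ddg_h a b c d - Riem g dg ddg a b c d)
   + kulkarni_nomizu sigma_Schouten g a b c d).
  by rewrite /sigma_Weyl !WeylE /kulkarni_nomizu /sigma_Schouten; ring.
by rewrite Riem_symbol.
Qed.

Lemma contr_sigma_Weyl b c :
  \sum_a \sum_d xi_up a * xi_up d * sigma_Weyl g dg ddg xi h a b c d
  = - 2^-1 * (N * xi c * w b + N * xi b * w c - N ^+ 2 * h b c - q * xi b * xi c)
    + (2 * mu * xi b * xi c - N * sigma_Schouten b c - mu * N * g b c).
Proof.
transitivity (- 2^-1 * (\sum_a \sum_d xi_up a * xi_up d * kulkarni_nomizu xixi h a b c d)
   + \sum_a \sum_d xi_up a * xi_up d * kulkarni_nomizu sigma_Schouten g a b c d).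
  by sum2_congr; rewrite Weyl_symbol; ring.
rewrite !contr_kulkarni_nomizu; last 4 first.
- exact: sigma_Schouten_sym.
- exact: gC.
- by move=> i j; rewrite mulrC.
- exact: hC.
rewrite !contr_xixi contr2_xixi !contr_sigma_Schouten contr2_sigma_Schouten !contr_g contr2_g.
ring.
Qed.

Lemma Chr_symbol k a b : Chr g dg_h k a b - Chr g dg k a b =
  2^-1 * \sum_m G k m * (xi a * h b m + xi b * h a m - xi m * h a b).
Proof. by rewrite /Chr -mulrBr -sumrB; congr (_ * _); apply: eq_bigr => m _; rewrite !mxE; ring. Qed.

Lemma sum_ginv_Chr_symbol m :
  \sum_a \sum_b G a b * (xi a * h b m + xi b * h a m - xi m * h a b) = 2 * w m.
Proof.
transitivity ((\sum_a \sum_b G a b * xi a * h b m) + (\sum_a \sum_b G a b * h a m * xi b)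
   - xi m * (\sum_a \sum_b G a b * h a b)).
  by sum2_congr; ring.
by rewrite sum_ginv_xiL sum_ginv_xiR sum_ginv_h -/(contr _ h m); ring.
Qed.

Lemma Gam_up_symbol l : Gam_up g dg_h l - Gam_up g dg l = \sum_m G l m * w m.
Proof.
rewrite /Gam_up -sumrB; under eq_bigr do rewrite -sumrB.
under eq_bigr do under eq_bigr do rewrite -mulrBr Chr_symbol !mulr_sumr.
under eq_bigr do rewrite exchange_big /=.
rewrite exchange_big; apply: eq_bigr => m _ /=.
transitivity (2^-1 * G l m *
  \sum_a \sum_b G a b * (xi a * h b m + xi b * h a m - xi m * h a b)).
  by sum2_congr; ring.
by rewrite sum_ginv_Chr_symbol; field.
Qed.

Lemma sigma_miGam_lowE k : sigma_miGam_low g dg xi h k = w k.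
Proof.
rewrite /sigma_miGam_low /Gam_low -sumrB -(mulmxV_contr w k g_unit).
by apply: eq_bigr => m _; rewrite -mulrBr Gam_up_symbol.
Qed.

Lemma contr_sigma_miGam_up : \sum_l xi l * sigma_miGam_up g dg xi h l = q.
Proof.
under eq_bigr do rewrite /sigma_miGam_up Gam_up_symbol mulr_sumr.
rewrite exchange_big; apply: eq_bigr => m _ /=.
by rewrite /raise mulr_suml; apply: eq_bigr => l _; rewrite ginvC mulrCA mulrA.
Qed.

End LinearizedCurvature.

Theorem lemma3p2 (R : realFieldType) (n : nat) (hn : (3 <= n)%N)
  (g : 'M[R]_n) (dg : jet1 R n) (ddg : jet2 R n)
  (g_sym : g^T = g)
  (g_pos : forall v : 'rV[R]_n, v != 0 -> 0 < (v *m g *m v^T) ord0 ord0)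
  (g_det : \det g = 1)
  (dg_sym : forall k, (dg k)^T = dg k)
  (ddg_sym : forall j k, (ddg j k)^T = ddg j k /\ ddg j k = ddg k j)
  (xi : 'I_n -> R) (h : 'M[R]_n) (h_sym : h^T = h)
  (h_tan : \tr (invmx g *m h) = 0) :
  forall b c : 'I_n,
    \sum_(a < n) \sum_(d < n)
        raise g xi a * raise g xi d * sigma_Weyl g dg ddg xi h a b c d
    = (n%:R - 3) / (2 * (n%:R - 2)) *
      ( norm2 g xi ^+ 2 * h b c
        - norm2 g xi * (xi b * sigma_miGam_low g dg xi h c
                        + xi c * sigma_miGam_low g dg xi h b)
        + (n%:R - 2) / (n%:R - 1) * xi b * xi c *
            (\sum_(l < n) xi l * sigma_miGam_up g dg xi h l)
        + (n%:R - 1)^-1 * norm2 g xi *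
            (\sum_(l < n) xi l * sigma_miGam_up g dg xi h l) * g b c ).
Proof.
move=> b c.
have g_unit : g \in unitmx by rewrite unitmxE g_det unitr1.
have n_gt2 : 2 < n%:R :> R by rewrite (ltr_nat R 2 n).
have n_gt1 : 1 < n%:R :> R by rewrite (ltr_nat R 1 n) (ltn_trans _ hn).
have n2_neq0 : n%:R - 2 != 0 :> R by rewrite subr_eq0 gt_eqF.
have n1_neq0 : n%:R - 1 != 0 :> R by rewrite subr_eq0 gt_eqF.
rewrite contr_sigma_Weyl // !sigma_miGam_lowE // contr_sigma_miGam_up //.
by rewrite sigma_SchoutenE //; field; rewrite n1_neq0 n2_neq0.
Qed.
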